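(* The relation on $\mathbb C^d_\Delta$ defined by $z\sim_N w$ if and only if $N\big(\overline{Az}\big)\cap\overline{Aw}\neq\emptyset$ (closures taken in $\mathbb C^d_\Delta$) is an equivalence relation.
   Context: Let $\mathfrak d$ be an $n$-dimensional real vector space, $\mathfrak d^*$ its dual and $\mathfrak d_{\mathbb C}=\mathfrak d\oplus i\mathfrak d$. A quasilattice in $\mathfrak d$ is the $\mathbb Z$-submodule generated by a finite set of vectors spanning $\mathfrak d$. Let $\Delta\subset\mathfrak d^*$ be an $n$-dimensional convex polytope (not necessarily rational or simple) with $d$ facets, written as $\Delta=\bigcap_{j=1}^d\{\mu\in\mathfrak d^*:\langle\mu,X_j\rangle\ge\lambda_j\}$, where $X_1,\dots,X_d\in\mathfrak d$ are chosen inward-pointing normals to the facets and $\lambda_j\in\mathbb R$; let $Q\subset\mathfrak d$ be a quasilattice containing $X_1,\dots,X_d$. For each face $F$ let $I_F\subseteq\{1,\dots,d\}$ be such that $F=\{\mu\in\Delta:\langle\mu,X_j\rangle=\lambda_j\iff j\in I_F\}$. Write $\mathbb C^F\times(\mathbb C^* )^{F^c}=\{z\in\mathbb C^d:z_j\ne0 \text{ for all } j\notin I_F\}$ and $\mathbb C^d_\Delta=\bigcup_F\mathbb C^F\times(\mathbb C^* )^{F^c}$ (union over all faces). Let $\pi:\mathbb R^d\to\mathfrak d$ with $e_j\mapsto X_j$, $\mathfrak n=\ker\pi$. $T^d=\mathbb R^d/\mathbb Z^d$ with projection $\exp$, acting on $\mathbb C^d$ by $\exp(Z)\cdot z=(e^{2\pi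 iZ_j}z_j)_j$ (extended to $\mathbb C^d/\mathbb Z^d$ for complex $Z$). $N=\ker(T^d\to\mathfrak d/Q)$ (induced by $\pi$) and $A=\{\exp(iY):Y\in\mathfrak n\}$, acting by $z_j\mapsto e^{-2\pi Y_j}z_j$. *)

From Stdlib Require Import Reals List Arith.
Open Scope R_scope.

(* Complex numbers as pairs (real part, imaginary part). *)
Definition Cx : Type := (R * R)%type.

Fixpoint sumR (m : nat) (f : nat -> R) : R :=
  match m with O => 0 | S k => sumR k f + f k end.

(* d = R^n realised as nat -> R (coordinates i < n); pairing d^* x d *)
Definition pairing (n : nat) (mu v : nat -> R) : R := sumR n (fun i => mu i * v i).

Definition inDelta (n d : nat) (X : nat -> nat -> R) (lam : nat -> R) (mu : nat -> R) : Prop :=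
  forall j, (j < d)%nat -> pairing n mu (X j) >= lam j.

(* Delta is a bounded, n-dimensional polytope and each of the d inequalities
   cuts out a facet, distinct for distinct j (irredundant representation). *)
Definition polytope_with_facets (n d : nat) (X : nat -> nat -> R) (lam : nat -> R) : Prop :=
  (exists M, forall mu, inDelta n d X lam mu -> forall i, (i < n)%nat -> Rabs (mu i) <= M) /\
  (exists mu0, forall j, (j < d)%nat -> pairing n mu0 (X j) > lam j) /\
  (forall j, (j < d)%nat -> exists mu, pairing n mu (X j) = lam j /\
       forall k, (k < d)%nat -> k <> j -> pairing n mu (X k) > lam k).

Definition lin_comb (n : nat) (gens : list (nat -> R)) (c : nat -> R) (i : nat) : R :=
  sumR (length gens) (fun k => c k * nth k gens (fun _ => 0) i).

Definition spans (n : nat) (gens : list (nat -> R)) : Prop :=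
  forall v : nat -> R, exists c : nat -> R,
    forall i, (i < n)%nat -> v i = lin_comb n gens c i.

Definition inQ (n : nat) (gens : list (nat -> R)) (v : nat -> R) : Prop :=
  exists c : nat -> Z, forall i, (i < n)%nat -> v i = lin_comb n gens (fun k => IZR (c k)) i.

Definition piX (d : nat) (X : nat -> nat -> R) (Z : nat -> R) : nat -> R :=
  fun i => sumR d (fun j => Z j * X j i).

Definition in_kernel (n d : nat) (X : nat -> nat -> R) (Y : nat -> R) : Prop :=
  forall i, (i < n)%nat -> piX d X Y i = 0.

(* exp(Z) in T^d lies in N = ker(T^d -> d/Q) iff pi(Z) in Q
   (elements of N are represented by such Z in R^d) *)
Definition in_N (n d : nat) (X : nat -> nat -> R) (gens : list (nat -> R)) (Z : nat -> R) : Prop :=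
  inQ n gens (piX d X Z).

(* points of C^d: nat -> Cx, with coordinates j >= d equal to 0 *)
Definition rot (t : R) (z : Cx) : Cx :=
  (cos (2 * PI * t) * fst z - sin (2 * PI * t) * snd z,
   sin (2 * PI * t) * fst z + cos (2 * PI * t) * snd z).

Definition rscale (a : R) (z : Cx) : Cx := (a * fst z, a * snd z).

(* exp(Z) . z = (e^{2 pi i Z_j} z_j)_j *)
Definition actT (d : nat) (Z : nat -> R) (z : nat -> Cx) : nat -> Cx :=
  fun j => if (j <? d)%nat then rot (Z j) (z j) else z j.

(* exp(iY) . z = (e^{-2 pi Y_j} z_j)_j *)
Definition actA (d : nat) (Y : nat -> R) (z : nat -> Cx) : nat -> Cx :=
  fun j => if (j <? d)%nat then rscale (exp (- (2 * PI * Y j))) (z j) else z j.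

(* I_mu = { j | <mu, X_j> = lam_j } ; index sets I_F of faces F of Delta are exactly
   the sets I_mu for mu in Delta *)
Definition face_index (n d : nat) (X : nat -> nat -> R) (lam : nat -> R) (I : nat -> Prop) : Prop :=
  exists mu, inDelta n d X lam mu /\
    forall j, (j < d)%nat -> (I j <-> pairing n mu (X j) = lam j).

(* C^d_Delta = union over faces F of C^F x (C-star)^{F^c} *)
Definition CdDelta (n d : nat) (X : nat -> nat -> R) (lam : nat -> R) (z : nat -> Cx) : Prop :=
  (forall j, (d <= j)%nat -> z j = (0, 0)) /\
  exists I, face_index n d X lam I /\
    forall j, (j < d)%nat -> ~ I j -> z j <> (0, 0).

Definition Aorbit (n d : nat) (X : nat -> nat -> R) (z : nat -> Cx) (p : nat -> Cx) : Prop :=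
  exists Y, in_kernel n d X Y /\ p = actA d Y z.

Definition closureD (n d : nat) (X : nat -> nat -> R) (lam : nat -> R)
    (S : (nat -> Cx) -> Prop) (p : nat -> Cx) : Prop :=
  CdDelta n d X lam p /\
  forall eps, eps > 0 -> exists s, S s /\
    forall j, (j < d)%nat ->
      Rabs (fst (p j) - fst (s j)) < eps /\ Rabs (snd (p j) - snd (s j)) < eps.

Definition Nimage (n d : nat) (X : nat -> nat -> R) (gens : list (nat -> R))
    (S : (nat -> Cx) -> Prop) (p : nat -> Cx) : Prop :=
  exists Z s, in_N n d X gens Z /\ S s /\ p = actT d Z s.

Definition simN (n d : nat) (X : nat -> nat -> R) (lam : nat -> R) (gens : list (nat -> R))
    (z w : nat -> Cx) : Prop :=
  CdDelta n d X lam z /\ CdDelta n d X lam w /\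
  exists p, Nimage n d X gens (closureD n d X lam (Aorbit n d X z)) p /\
            closureD n d X lam (Aorbit n d X w) p.

(* Reflexivity and symmetry only use that N is a group acting by rotations
   that commute with A.  For transitivity, let g.s = p with s in cl(Az) and
   p in cl(Aw), and g'.t = p' with t in cl(Aw) and p' in cl(Au).  It suffices
   to find a common point q of cl(Ap) and cl(At): then g^-1.q lies in
   cl(As), which is contained in cl(Az), and g'.q lies in cl(Ap'), contained
   in cl(Au).  Coordinatewise, every point of cl(Aw) is a nonnegative multiple
   of w (ray_limit), so p_j = a_j w_j, t_j = b_j w_j, and q_j := a_j b_j w_j
   works as soon as q lies in C^d_Delta.  That is the key lemma zeros_tight:
   a point mu of Delta tight on the facets of the zeros of w is also tight on
   the facets of the zeros of every point of cl(Aw).  It is proved by pairing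
   (<mu - mu', X_j>)_j, which is orthogonal to ker pi, with the logarithms
   2 pi Y_j of the A-parameters of approximations of that point. *)

From Stdlib Require Import Reals List Arith Lra Lia Psatz Classical FunctionalExtensionality.
Open Scope R_scope.

Lemma sumR_ext m f g : (forall k, (k < m)%nat -> f k = g k) -> sumR m f = sumR m g.
Proof.
  induction m as [|m IH]; intros H; simpl; auto.
  rewrite IH, H; auto; intros; apply H; lia.
Qed.

Lemma sumR_plus m f g : sumR m (fun k => f k + g k) = sumR m f + sumR m g.
Proof. induction m as [|m IH]; simpl; [lra|]. rewrite IH; lra. Qed.

Lemma sumR_scal m c f : sumR m (fun k => c * f k) = c * sumR m f.
Proof. induction m as [|m IH]; simpl; [lra|]. rewrite IH; lra. Qed.

Lemma sumR_zero m : sumR m (fun _ => 0) = 0.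
Proof. induction m as [|m IH]; simpl; [lra|]. rewrite IH; lra. Qed.

Lemma sumR_swap m p F :
  sumR m (fun j => sumR p (fun i => F i j)) = sumR p (fun i => sumR m (fun j => F i j)).
Proof.
  induction m as [|m IH]; simpl.
  - now rewrite sumR_zero.
  - now rewrite IH, <- sumR_plus.
Qed.

Lemma sumR_le m f g : (forall k, (k < m)%nat -> f k <= g k) -> sumR m f <= sumR m g.
Proof.
  induction m as [|m IH]; intros H; simpl; [lra|].
  assert (f m <= g m) by (apply H; lia).
  assert (sumR m f <= sumR m g) by (apply IH; intros; apply H; lia).
  lra.
Qed.

Lemma sumR_nonneg m f : (forall k, (k < m)%nat -> 0 <= f k) -> 0 <= sumR m f.
Proof. intros H. rewrite <- (sumR_zero m). now apply sumR_le. Qed.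

Lemma sumR_ge_term m f j :
  (forall k, (k < m)%nat -> 0 <= f k) -> (j < m)%nat -> f j <= sumR m f.
Proof.
  induction m as [|m IH]; intros H Hj; [lia|]. simpl.
  assert (0 <= f m) by (apply H; lia).
  destruct (Nat.eq_dec j m) as [->|Hne].
  - assert (0 <= sumR m f) by (apply sumR_nonneg; intros; apply H; lia). lra.
  - assert (f j <= sumR m f) by (apply IH; [intros; apply H; lia | lia]). lra.
Qed.

Lemma sumR_indicator m j0 v :
  (j0 < m)%nat -> sumR m (fun j => if Nat.eqb j j0 then v else 0) = v.
Proof.
  induction m as [|m IH]; intros Hj; [lia|]. simpl.
  destruct (Nat.eq_dec j0 m) as [->|Hne].
  - rewrite Nat.eqb_refl, (sumR_ext m _ (fun _ => 0)), sumR_zero; [lra|].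
    intros k Hk. destruct (Nat.eqb_spec k m); [lia|auto].
  - rewrite IH by lia. destruct (Nat.eqb_spec m j0); [lia|lra].
Qed.

Lemma finite_bound m f : exists M, 0 < M /\ forall j, (j < m)%nat -> Rabs (f j) + 1 <= M.
Proof.
  exists (1 + sumR m (fun j => Rabs (f j))).
  assert (Hnn : forall k, (k < m)%nat -> 0 <= Rabs (f k)) by (intros; apply Rabs_pos).
  pose proof (sumR_nonneg m _ Hnn). split; [lra|].
  intros j Hj. pose proof (sumR_ge_term m _ j Hnn Hj). lra.
Qed.

Lemma uniform_eps m (P : nat -> R -> Prop) :
  (forall j e e', P j e -> 0 < e' -> e' <= e -> P j e') ->
  (forall j, (j < m)%nat -> exists e, 0 < e /\ P j e) ->
  exists e, 0 < e /\ forall j, (j < m)%nat -> P j e.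
Proof.
  intros Hmon. induction m as [|m IH]; intros H.
  - exists 1. split; [lra | intros; lia].
  - destruct IH as [e1 [He1 H1]]; [intros; apply H; lia|].
    destruct (H m) as [e2 [He2 H2]]; [lia|].
    assert (Hmin : 0 < Rmin e1 e2) by now apply Rmin_pos.
    exists (Rmin e1 e2). split; [exact Hmin|].
    intros j Hj. destruct (Nat.eq_dec j m) as [->|Hne].
    + apply Hmon with e2; auto. apply Rmin_r.
    + apply Hmon with e1; auto. apply H1; lia. apply Rmin_l.
Qed.

Lemma le_0_of_small c M : 0 <= M -> (forall eps, 0 < eps -> c <= eps * M) -> c <= 0.
Proof.
  intros HM H. apply Rle_plus_epsilon. intros eps He.
  assert (Hq : 0 < eps / (M + 1)) by (apply Rdiv_lt_0_compat; lra).
  specialize (H _ Hq).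
  assert (eps / (M + 1) * M <= eps).
  { apply (Rmult_le_reg_r (M + 1)); [lra|].
    replace (eps / (M + 1) * M * (M + 1)) with (eps * M) by (field; lra). nra. }
  lra.
Qed.

Lemma Rabs_le_0_eq c : Rabs c <= 0 -> c = 0.
Proof.
  intros H. destruct (Req_dec c 0) as [|Hc]; auto.
  pose proof (Rabs_pos_lt c Hc). lra.
Qed.

Lemma eq_0_of_small c : (forall eps, 0 < eps -> Rabs c < eps) -> c = 0.
Proof.
  intros H. apply Rabs_le_0_eq, le_0_of_small with 1; [lra|].
  intros eps He. specialize (H eps He). lra.
Qed.

Lemma Rdiv_nonneg a b : 0 <= a -> 0 < b -> 0 <= a / b.
Proof. intros Ha Hb. apply Rmult_le_pos; [lra | left; now apply Rinv_0_lt_compat]. Qed.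

Definition close (e : R) (u v : Cx) : Prop :=
  Rabs (fst u - fst v) < e /\ Rabs (snd u - snd v) < e.

Lemma close_refl e u : 0 < e -> close e u u.
Proof. intros He. unfold close. rewrite !Rminus_diag, Rabs_R0. auto. Qed.

Lemma close_triang e1 e2 u v w : close e1 u v -> close e2 v w -> close (e1 + e2) u w.
Proof.
  intros [H1 H2] [H3 H4]. split.
  - replace (fst u - fst w) with ((fst u - fst v) + (fst v - fst w)) by ring.
    eapply Rle_lt_trans; [apply Rabs_triang | lra].
  - replace (snd u - snd w) with ((snd u - snd v) + (snd v - snd w)) by ring.
    eapply Rle_lt_trans; [apply Rabs_triang | lra].
Qed.

(* Scaling by a >= 0 multiplies distances by a; we absorb it in a bound M > a. *)
Lemma close_rscale a M e u v :
  0 <= a -> a + 1 <= M -> close (e / M) u v -> close e (rscale a u) (rscale a v).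
Proof.
  intros Ha HaM [H1 H2].
  assert (Hk : a * (e / M) < e).
  { assert (Hem : 0 < e / M) by (pose proof (Rabs_pos (fst u - fst v)); lra).
    replace e with (e / M * M) at 2 by (field; lra). nra. }
  unfold rscale; split; simpl.
  - replace (a * fst u - a * fst v) with (a * (fst u - fst v)) by ring.
    rewrite Rabs_mult, Rabs_right by lra. pose proof (Rabs_pos (fst u - fst v)). nra.
  - replace (a * snd u - a * snd v) with (a * (snd u - snd v)) by ring.
    rewrite Rabs_mult, Rabs_right by lra. pose proof (Rabs_pos (snd u - snd v)). nra.
Qed.

Lemma close_rot t e u v : close e u v -> close (2 * e) (rot t u) (rot t v).
Proof.
  intros [H1 H2]. destruct u as [u1 u2], v as [v1 v2]. unfold close, rot; simpl in *.
  pose proof (COS_bound (2 * PI * t)); pose proof (SIN_bound (2 * PI * t)).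
  set (c := cos (2 * PI * t)) in *; set (s := sin (2 * PI * t)) in *.
  assert (Hc : Rabs c <= 1) by (apply Rabs_le; lra).
  assert (Hs : Rabs s <= 1) by (apply Rabs_le; lra).
  pose proof (Rabs_pos (u1 - v1)); pose proof (Rabs_pos (u2 - v2)).
  pose proof (Rabs_pos c); pose proof (Rabs_pos s).
  split.
  - replace (c * u1 - s * u2 - (c * v1 - s * v2)) with (c * (u1 - v1) + - (s * (u2 - v2)))
      by ring.
    eapply Rle_lt_trans; [apply Rabs_triang|]. rewrite Rabs_Ropp, !Rabs_mult. nra.
  - replace (s * u1 + c * u2 - (s * v1 + c * v2)) with (s * (u1 - v1) + c * (u2 - v2))
      by ring.
    eapply Rle_lt_trans; [apply Rabs_triang|]. rewrite !Rabs_mult. nra.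
Qed.

Lemma rot_rot a b z : rot a (rot b z) = rot (a + b) z.
Proof.
  destruct z as [x y]; unfold rot; simpl.
  replace (2 * PI * (a + b)) with (2 * PI * a + 2 * PI * b) by ring.
  rewrite cos_plus, sin_plus. f_equal; ring.
Qed.

Lemma rot_0 z : rot 0 z = z.
Proof.
  destruct z as [x y]; unfold rot; simpl.
  rewrite Rmult_0_r, cos_0, sin_0. f_equal; ring.
Qed.

Lemma rot_inv t z : rot (- t) (rot t z) = z.
Proof. rewrite rot_rot, Rplus_opp_l. apply rot_0. Qed.

Lemma rot_eq0 t z : rot t z = (0, 0) -> z = (0, 0).
Proof.
  intros H. rewrite <- (rot_inv t z), H. unfold rot; simpl. f_equal; ring.
Qed.

Lemma rot_rscale t a z : rot t (rscale a z) = rscale a (rot t z).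
Proof. destruct z; unfold rot, rscale; simpl; f_equal; ring. Qed.

Lemma rscale_rscale a b z : rscale a (rscale b z) = rscale (a * b) z.
Proof. destruct z; unfold rscale; simpl; f_equal; ring. Qed.

Lemma rscale_eq0 a z : rscale a z = (0, 0) -> a = 0 \/ z = (0, 0).
Proof.
  destruct z as [x y]; unfold rscale; simpl. intros H. injection H as Hx Hy.
  destruct (Req_dec a 0) as [Ha|Ha]; [now left|right].
  apply Rmult_integral in Hx; apply Rmult_integral in Hy.
  destruct Hx, Hy; try contradiction. now subst.
Qed.

Lemma actT_lt d Z z j : (j < d)%nat -> actT d Z z j = rot (Z j) (z j).
Proof. intros H; unfold actT; now rewrite (proj2 (Nat.ltb_lt j d) H). Qed.

Lemma actT_ge d Z z j : (d <= j)%nat -> actT d Z z j = z j.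
Proof. intros H; unfold actT. destruct (Nat.ltb_spec j d); [lia|auto]. Qed.

Lemma actA_lt d Y z j : (j < d)%nat -> actA d Y z j = rscale (exp (- (2 * PI * Y j))) (z j).
Proof. intros H; unfold actA; now rewrite (proj2 (Nat.ltb_lt j d) H). Qed.

Lemma actT_0 d x : actT d (fun _ => 0) x = x.
Proof.
  apply functional_extensionality; intros j; unfold actT.
  destruct (j <? d)%nat; auto. apply rot_0.
Qed.

Lemma actT_actT d Z Z' x : actT d Z' (actT d Z x) = actT d (fun j => Z' j + Z j) x.
Proof.
  apply functional_extensionality; intros j; unfold actT.
  destruct (j <? d)%nat; auto. apply rot_rot.
Qed.

Lemma actT_inv d Z x : actT d (fun j => - Z j) (actT d Z x) = x.
Proof.
  apply functional_extensionality; intros j; unfold actT.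
  destruct (j <? d)%nat; auto. apply rot_inv.
Qed.

Lemma actA_actA d Y Y' x : actA d Y (actA d Y' x) = actA d (fun j => Y j + Y' j) x.
Proof.
  apply functional_extensionality; intros j; unfold actA.
  destruct (j <? d)%nat; auto. rewrite rscale_rscale, <- exp_plus. f_equal. f_equal. ring.
Qed.

Lemma actT_actA d Z Y x : actT d Z (actA d Y x) = actA d Y (actT d Z x).
Proof.
  apply functional_extensionality; intros j; unfold actT, actA.
  destruct (j <? d)%nat; auto. apply rot_rscale.
Qed.

Lemma piX_lin d X a Z Z' i :
  piX d X (fun j => Z j + a * Z' j) i = piX d X Z i + a * piX d X Z' i.
Proof. unfold piX. rewrite <- sumR_scal, <- sumR_plus. apply sumR_ext; intros; ring. Qed.

Lemma lin_comb_lin n g a c c' i :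
  lin_comb n g (fun k => c k + a * c' k) i = lin_comb n g c i + a * lin_comb n g c' i.
Proof. unfold lin_comb. rewrite <- sumR_scal, <- sumR_plus. apply sumR_ext; intros; ring. Qed.

Lemma in_N_lin n d X g V V' (a : Z) :
  in_N n d X g V -> in_N n d X g V' -> in_N n d X g (fun j => V j + IZR a * V' j).
Proof.
  intros [c Hc] [c' Hc']. exists (fun k => (c k + a * c' k)%Z). intros i Hi.
  rewrite piX_lin, Hc, Hc', <- lin_comb_lin by auto.
  unfold lin_comb. apply sumR_ext; intros. now rewrite plus_IZR, mult_IZR.
Qed.

Lemma in_N_0 n d X g : in_N n d X g (fun _ => 0).
Proof.
  exists (fun _ => 0%Z). intros i Hi. unfold piX, lin_comb.
  rewrite (sumR_ext _ _ (fun _ => 0)), (sumR_ext (length g) _ (fun _ => 0)), !sumR_zero;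
    auto; intros; simpl; ring.
Qed.

Lemma in_N_opp n d X g Z : in_N n d X g Z -> in_N n d X g (fun j => - Z j).
Proof.
  intros HZ. pose proof (in_N_lin n d X g _ _ (-1)%Z (in_N_0 n d X g) HZ) as H.
  replace (fun j => - Z j) with (fun j => 0 + IZR (-1) * Z j); auto.
  apply functional_extensionality; intros; simpl; ring.
Qed.

Lemma in_N_plus n d X g Z Z' :
  in_N n d X g Z -> in_N n d X g Z' -> in_N n d X g (fun j => Z j + Z' j).
Proof.
  intros HZ HZ'. pose proof (in_N_lin n d X g _ _ 1%Z HZ HZ') as H.
  replace (fun j => Z j + Z' j) with (fun j => Z j + IZR 1 * Z' j); auto.
  apply functional_extensionality; intros; simpl; ring.
Qed.

Lemma kernel_0 n d X : in_kernel n d X (fun _ => 0).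
Proof.
  intros i Hi. unfold piX. rewrite (sumR_ext _ _ (fun _ => 0)) by (intros; ring).
  apply sumR_zero.
Qed.

Lemma kernel_plus n d X Y Y' :
  in_kernel n d X Y -> in_kernel n d X Y' -> in_kernel n d X (fun j => Y j + Y' j).
Proof.
  intros H H' i Hi. pose proof (piX_lin d X 1 Y Y' i) as E.
  replace (fun j => Y j + Y' j) with (fun j => Y j + 1 * Y' j)
    by (apply functional_extensionality; intros; ring).
  rewrite E, H, H'; auto; ring.
Qed.

Lemma kernel_orthogonal n d X Y m1 m2 : in_kernel n d X Y ->
  sumR d (fun j => Y j * (pairing n m1 (X j) - pairing n m2 (X j))) = 0.
Proof.
  intros HY. unfold pairing.
  rewrite (sumR_ext d _ (fun j => sumR n (fun i => (m1 i - m2 i) * (Y j * X j i)))).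
  2:{ intros j Hj.
      replace (sumR n (fun i => m1 i * X j i) - sumR n (fun i => m2 i * X j i))
        with (sumR n (fun i => m1 i * X j i) + (-1) * sumR n (fun i => m2 i * X j i)) by ring.
      rewrite <- sumR_scal, <- sumR_plus, <- sumR_scal. apply sumR_ext; intros; ring. }
  rewrite sumR_swap, (sumR_ext n _ (fun _ => 0)); [apply sumR_zero|].
  intros i Hi. rewrite sumR_scal. fold (piX d X Y i). rewrite HY; auto; ring.
Qed.

Definition face_witness (n d : nat) (X : nat -> nat -> R) (lam : nat -> R)
    (mu : nat -> R) (z : nat -> Cx) : Prop :=
  inDelta n d X lam mu /\
  forall j, (j < d)%nat -> z j = (0, 0) -> pairing n mu (X j) = lam j.

Lemma CdDelta_witness n d X lam z :
  CdDelta n d X lam z -> exists mu, face_witness n d X lam mu z.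
Proof.
  intros [_ [I [[mu [Hmu HI]] Hnz]]]. exists mu. split; auto.
  intros j Hj Hz. apply HI; auto. apply NNPP; intros HnI. exact (Hnz j Hj HnI Hz).
Qed.

Lemma CdDelta_of_witness n d X lam z mu :
  (forall j, (d <= j)%nat -> z j = (0, 0)) -> face_witness n d X lam mu z ->
  CdDelta n d X lam z.
Proof.
  intros H0 [Hmu Htight]. split; auto.
  exists (fun j => pairing n mu (X j) = lam j). split.
  - exists mu. split; auto. intros; tauto.
  - intros j Hj Hn Hz. apply Hn, Htight; auto.
Qed.

Lemma CdDelta_actT n d X lam Z x : CdDelta n d X lam x -> CdDelta n d X lam (actT d Z x).
Proof.
  intros Hx. destruct (CdDelta_witness _ _ _ _ _ Hx) as [mu [Hmu Ht]].
  apply CdDelta_of_witness with mu.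
  - intros j Hj. rewrite actT_ge by auto. now apply Hx.
  - split; auto. intros j Hj H0. rewrite actT_lt in H0 by auto.
    apply Ht; auto. eapply rot_eq0; eauto.
Qed.

(** * Rays and logarithmic windows in C *)

Definition cnorm (w : Cx) : R := Rabs (fst w) + Rabs (snd w).

Lemma cnorm_pos w : w <> (0, 0) -> 0 < cnorm w.
Proof.
  destruct w as [x y]; unfold cnorm; simpl; intros H.
  pose proof (Rabs_pos x); pose proof (Rabs_pos y).
  destruct (Req_dec x 0) as [->|Hx].
  - destruct (Req_dec y 0) as [->|Hy]; [now exfalso|].
    pose proof (Rabs_pos_lt y Hy); lra.
  - pose proof (Rabs_pos_lt x Hx); lra.
Qed.

Lemma ray_coef_continuity w a delta :
  w <> (0, 0) -> 0 < delta ->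
  exists e, 0 < e /\ forall r, close e (rscale a w) (rscale r w) -> Rabs (a - r) < delta.
Proof.
  intros Hw Hd. pose proof (cnorm_pos w Hw) as Hn.
  exists (delta * cnorm w / 2). split; [apply Rdiv_lt_0_compat; nra|].
  intros r [H1 H2]. unfold rscale, cnorm in *; simpl in *.
  replace (a * fst w - r * fst w) with ((a - r) * fst w) in H1 by ring.
  replace (a * snd w - r * snd w) with ((a - r) * snd w) in H2 by ring.
  rewrite Rabs_mult in H1, H2.
  assert (Rabs (a - r) * (Rabs (fst w) + Rabs (snd w)) < delta * (Rabs (fst w) + Rabs (snd w)))
    by lra.
  nra.
Qed.

Definition ray_coef (p w : Cx) : R :=
  (fst p * fst w + snd p * snd w) / (fst w * fst w + snd w * snd w).

Lemma close_ray_estimates eps u v x y r : 0 <= r -> close eps (u, v) (rscale r (x, y)) ->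
  Rabs (u * y - v * x) <= eps * (Rabs x + Rabs y) /\
  - (u * x + v * y) <= eps * (Rabs x + Rabs y).
Proof.
  intros Hr [H1 H2]. unfold rscale in *; simpl in *.
  pose proof (Rabs_pos x); pose proof (Rabs_pos y).
  assert (Ex : Rabs ((u - r * x) * x) <= eps * Rabs x) by (rewrite Rabs_mult; nra).
  assert (Ey : Rabs ((v - r * y) * y) <= eps * Rabs y) by (rewrite Rabs_mult; nra).
  split.
  - replace (u * y - v * x) with ((u - r * x) * y + - ((v - r * y) * x)) by ring.
    eapply Rle_trans; [apply Rabs_triang|]. rewrite Rabs_Ropp, !Rabs_mult. nra.
  - replace (- (u * x + v * y))
      with (- ((u - r * x) * x) + - ((v - r * y) * y) - r * (x * x + y * y)) by ring.
    pose proof (Rle_abs (- ((u - r * x) * x))); pose proof (Rle_abs (- ((v - r * y) * y))).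
    rewrite Rabs_Ropp in *. nra.
Qed.

Lemma ray_limit (p w : Cx) :
  (forall eps, 0 < eps -> exists r, 0 < r /\ close eps p (rscale r w)) ->
  0 <= ray_coef p w /\ p = rscale (ray_coef p w) w.
Proof.
  destruct p as [u v], w as [x y]. unfold ray_coef; simpl. intros H.
  assert (HM : 0 <= Rabs x + Rabs y) by (pose proof (Rabs_pos x); pose proof (Rabs_pos y); lra).
  assert (Hcross : u * y - v * x = 0).
  { apply Rabs_le_0_eq, le_0_of_small with (Rabs x + Rabs y); auto. intros eps He.
    destruct (H eps He) as [r [Hr Hc]]. apply (close_ray_estimates eps u v x y r); auto; lra. }
  assert (Hdot : 0 <= u * x + v * y).
  { assert (- (u * x + v * y) <= 0); [|lra].
    apply le_0_of_small with (Rabs x + Rabs y); auto. intros eps He.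
    destruct (H eps He) as [r [Hr Hc]]. apply (close_ray_estimates eps u v x y r); auto; lra. }
  destruct (Req_dec (x * x + y * y) 0) as [Hn|Hn].
  - assert (x = 0) by nra. assert (y = 0) by nra. subst x y.
    assert (u = 0).
    { apply eq_0_of_small. intros eps He. destruct (H eps He) as [r [_ [Hc _]]].
      unfold rscale in Hc; simpl in Hc. now rewrite Rmult_0_r, Rminus_0_r in Hc. }
    assert (v = 0).
    { apply eq_0_of_small. intros eps He. destruct (H eps He) as [r [_ [_ Hc]]].
      unfold rscale in Hc; simpl in Hc. now rewrite Rmult_0_r, Rminus_0_r in Hc. }
    subst u v. unfold rscale; simpl. rewrite Rmult_0_r, Rplus_0_r, Rdiv_0_r.
    split; [lra | f_equal; ring].
  - split; [apply Rdiv_nonneg; nra|]. unfold rscale; simpl. f_equal.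
    + apply Rmult_eq_reg_r with (x * x + y * y); auto. field_simplify; auto.
      transitivity (u * x ^ 2 + u * y ^ 2 - y * (u * y - v * x)); [rewrite Hcross|]; ring.
    + apply Rmult_eq_reg_r with (x * x + y * y); auto. field_simplify; auto.
      transitivity (v * y ^ 2 + x * y * u - x * (u * y - v * x)); [|rewrite Hcross]; ring.
Qed.

(* Width of the logarithmic window  ]ln(rh/2), ln(3 rh/2)[  around ln rh. *)
Definition log_width (rh : R) : R := Rabs (ln (rh / 2)) + Rabs (ln (3 * rh / 2)).

Lemma log_width_nonneg rh : 0 <= log_width rh.
Proof.
  unfold log_width. pose proof (Rabs_pos (ln (rh / 2))); pose proof (Rabs_pos (ln (3 * rh / 2))).
  lra.
Qed.

Lemma log_bounded_near_ray w rh : w <> (0, 0) -> 0 < rh ->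
  exists e, 0 < e /\ forall b,
    close e (rscale rh w) (rscale (exp (- b)) w) -> Rabs b <= log_width rh.
Proof.
  intros Hw Hrh. destruct (ray_coef_continuity w rh (rh / 2) Hw) as [e [He Hcont]]; [lra|].
  exists e. split; auto. intros b Hc. apply Hcont, Rabs_def2 in Hc. destruct Hc as [Hlo Hhi].
  pose proof (exp_pos (- b)).
  assert (G1 : ln (rh / 2) < - b) by (rewrite <- (ln_exp (- b)); apply ln_increasing; lra).
  assert (G2 : - b < ln (3 * rh / 2)) by (rewrite <- (ln_exp (- b)); apply ln_increasing; lra).
  unfold log_width. pose proof (Rle_abs (ln (rh / 2))); pose proof (Rle_abs (ln (3 * rh / 2))).
  pose proof (Rle_abs (- ln (rh / 2))); pose proof (Rle_abs (- ln (3 * rh / 2))).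
  rewrite Rabs_Ropp in *. apply Rabs_le. lra.
Qed.

Lemma log_large_near_zero w K : w <> (0, 0) ->
  exists e, 0 < e /\ forall b, close e (rscale 0 w) (rscale (exp (- b)) w) -> K <= b.
Proof.
  intros Hw. destruct (ray_coef_continuity w 0 (exp (- K)) Hw) as [e [He Hcont]];
    [apply exp_pos|].
  exists e. split; auto. intros b Hc. apply Hcont in Hc.
  rewrite Rminus_0_l, Rabs_Ropp, Rabs_right in Hc by (left; apply exp_pos).
  apply exp_lt_inv in Hc. lra.
Qed.

Lemma log_estimates (wj pj : Cx) rh K : 0 <= rh -> pj = rscale rh wj ->
  exists e, 0 < e /\ forall b, close e pj (rscale (exp (- b)) wj) ->
    (pj <> (0, 0) -> Rabs b <= log_width rh) /\ (wj <> (0, 0) -> pj = (0, 0) -> K <= b).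
Proof.
  intros Hrh ->. destruct (classic (wj = (0, 0))) as [Hw|Hw].
  - exists 1. split; [lra|]. intros b _. split; [|tauto].
    intros Hp. exfalso. apply Hp. rewrite Hw. unfold rscale; simpl. f_equal; ring.
  - destruct (Req_dec rh 0) as [->|Hrh0].
    + destruct (log_large_near_zero wj K Hw) as [e [He Hb]].
      exists e. split; auto. intros b Hc. split; [|intros; now apply Hb].
      intros Hp. exfalso. apply Hp. unfold rscale; simpl. f_equal; ring.
    + destruct (log_bounded_near_ray wj rh Hw) as [e [He Hb]]; [lra|].
      exists e. split; auto. intros b Hc. split; [intros; now apply Hb|].
      intros _ Hp. exfalso. apply rscale_eq0 in Hp. tauto.
Qed.

(* One term  b_j dl_j  of the orthogonality relation, bounded from below in the
   three possible situations of a coordinate. *)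
Lemma term_lower_bound b dl L K m : 0 <= L -> 0 <= K ->
  (Rabs b <= L /\ m = 0) \/ (K <= b /\ 0 <= m <= dl) \/ (dl = 0 /\ m = 0) ->
  K * m - L * Rabs dl <= b * dl.
Proof.
  intros HL HK [[Hb ->]|[[Hb [Hm Hmd]]|[-> ->]]].
  - pose proof (Rabs_pos b); pose proof (Rabs_pos dl). pose proof (Rle_abs (- (b * dl))).
    rewrite Rabs_Ropp, Rabs_mult in *. nra.
  - pose proof (Rabs_pos dl). nra.
  - rewrite Rabs_R0. lra.
Qed.

Lemma sum_lower_bound m j0 K c0 (L dl b : nat -> R) : (j0 < m)%nat ->
  (forall j, (j < m)%nat ->
     K * (if Nat.eqb j j0 then c0 else 0) - L j * Rabs (dl j) <= b j * dl j) ->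
  K * c0 - sumR m (fun j => L j * Rabs (dl j)) <= sumR m (fun j => b j * dl j).
Proof.
  intros Hj0 Hterm. pose proof (sumR_le m _ _ Hterm) as Hsum.
  rewrite (sumR_ext m _ (fun j => K * (if Nat.eqb j j0 then c0 else 0)
      + (-1) * (L j * Rabs (dl j)))) in Hsum by (intros; ring).
  rewrite sumR_plus, !sumR_scal, sumR_indicator in Hsum by auto. lra.
Qed.

(** * Closures of A-orbits *)

Section OrbitClosures.

Variables (n d : nat) (X : nat -> nat -> R) (lam : nat -> R).

Local Notation CdD := (CdDelta n d X lam).
Local Notation cl w := (closureD n d X lam (Aorbit n d X w)).

Lemma cl_self z : CdD z -> cl z z.
Proof.
  intros Hz. split; auto. intros eps He. exists (actA d (fun _ => 0) z). split.
  - exists (fun _ => 0). split; auto. apply kernel_0.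
  - intros j Hj. rewrite actA_lt, Rmult_0_r, Ropp_0, exp_0 by auto.
    destruct (z j) as [x y]. unfold rscale; simpl. rewrite !Rmult_1_l.
    exact (close_refl eps (x, y) He).
Qed.

Lemma cl_trans x y z : cl y x -> cl z y -> cl z x.
Proof.
  intros [Hx Hxy] [_ Hyz]. split; auto. intros eps He.
  destruct (Hxy (eps / 2)) as [s [[Y1 [HY1 ->]] H1]]; [lra|].
  destruct (finite_bound d (fun j => exp (- (2 * PI * Y1 j)))) as [M [HM HMb]].
  destruct (Hyz (eps / 2 / M)) as [s [[Y2 [HY2 ->]] H2]].
  { apply Rdiv_lt_0_compat; lra. }
  exists (actA d (fun j => Y1 j + Y2 j) z). split.
  - exists (fun j => Y1 j + Y2 j). split; auto. now apply kernel_plus.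
  - intros j Hj. rewrite <- actA_actA.
    replace eps with (eps / 2 + eps / 2) by field.
    apply close_triang with (actA d Y1 y j); [now apply H1|].
    rewrite (actA_lt d Y1 y), (actA_lt d Y1 (actA d Y2 z)) by auto.
    pose proof (exp_pos (- (2 * PI * Y1 j))). specialize (HMb j Hj).
    rewrite Rabs_right in HMb by lra.
    apply close_rscale with M; [lra | lra | now apply H2].
Qed.

Lemma cl_actT Z x y : cl y x -> cl (actT d Z y) (actT d Z x).
Proof.
  intros [Hx Hxy]. split; [now apply CdDelta_actT|].
  intros eps He. destruct (Hxy (eps / 2)) as [s [[Y [HY ->]] H1]]; [lra|].
  exists (actA d Y (actT d Z y)). split; [exists Y; split; auto|].
  intros j Hj. rewrite <- actT_actA, !actT_lt by auto.
  replace eps with (2 * (eps / 2)) by field. apply close_rot. now apply H1.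
Qed.

Lemma cl_ray w p : cl w p ->
  forall j, (j < d)%nat -> 0 <= ray_coef (p j) (w j) /\ p j = rscale (ray_coef (p j) (w j)) (w j).
Proof.
  intros [_ H] j Hj. apply ray_limit. intros eps He.
  destruct (H eps He) as [s [[Y [_ ->]] Hs]].
  exists (exp (- (2 * PI * Y j))). split; [apply exp_pos|].
  rewrite <- (actA_lt d Y w j) by auto. now apply Hs.
Qed.

Lemma uniform_log_estimates w p (K : R) : cl w p ->
  exists eps, 0 < eps /\ forall Y, (forall j, (j < d)%nat -> close eps (p j) (actA d Y w j)) ->
    forall j, (j < d)%nat ->
      (p j <> (0, 0) -> Rabs (2 * PI * Y j) <= log_width (ray_coef (p j) (w j))) /\
      (w j <> (0, 0) -> p j = (0, 0) -> K <= 2 * PI * Y j).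
Proof.
  intros Hp. pose proof (cl_ray w p Hp) as Hray.
  destruct (uniform_eps d (fun j e => forall b, close e (p j) (rscale (exp (- b)) (w j)) ->
      (p j <> (0, 0) -> Rabs b <= log_width (ray_coef (p j) (w j))) /\
      (w j <> (0, 0) -> p j = (0, 0) -> K <= b))) as [eps [He Hest]].
  { intros j e e' H He' Hle b [H1 H2]. apply H; split; lra. }
  { intros j Hj. destruct (Hray j Hj). now apply log_estimates. }
  exists eps. split; auto. intros Y HY j Hj. apply Hest; auto.
  rewrite <- (actA_lt d Y w j) by auto. now apply HY.
Qed.

(* Key lemma: if mu witnesses the face of w, it also witnesses the face of
   every point p of cl(Aw).  Otherwise some zero j0 of p is not tight for mu;
   comparing with a witness mu' of p, the vector dl_j = <mu - mu', X_j> is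
   orthogonal to ker pi, yet the A-parameters approximating p have
   logarithms bounded where p_j != 0 and arbitrarily large where p_j = 0 and
   w_j != 0, making the pairing with dl strictly positive. *)
Lemma zeros_tight w p mu : face_witness n d X lam mu w -> cl w p -> face_witness n d X lam mu p.
Proof.
  intros [Hmu Htw] Hp. split; auto. intros j0 Hj0 Hp0.
  pose proof Hp as [Hpc Happrox].
  destruct (CdDelta_witness _ _ _ _ _ Hpc) as [mu' [_ Htp]].
  apply NNPP; intro Hne.
  set (c0 := pairing n mu (X j0) - lam j0).
  assert (Hc0 : 0 < c0) by (pose proof (Hmu j0 Hj0); unfold c0; destruct H; [lra|tauto]).
  assert (Hw0 : w j0 <> (0, 0)) by (intro H; apply Hne, Htw; auto).
  set (dl := fun j => pairing n mu (X j) - pairing n mu' (X j)).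
  set (L := fun j => log_width (ray_coef (p j) (w j))).
  set (B := sumR d (fun j => L j * Rabs (dl j))).
  assert (HB : 0 <= B).
  { apply sumR_nonneg. intros. apply Rmult_le_pos; [apply log_width_nonneg | apply Rabs_pos]. }
  set (K := (B + 1) / c0).
  assert (HK : 0 <= K) by (apply Rdiv_nonneg; lra).
  destruct (uniform_log_estimates w p K Hp) as [eps [He Hest]].
  destruct (Happrox eps He) as [s [[Y [HY ->]] Hs]].
  specialize (Hest Y Hs).
  assert (Horth : sumR d (fun j => (2 * PI * Y j) * dl j) = 0).
  { rewrite (sumR_ext d _ (fun j => 2 * PI * (Y j * dl j))) by (intros; ring).
    rewrite sumR_scal. unfold dl. rewrite kernel_orthogonal; auto; ring. }
  assert (Hterm : forall j, (j < d)%nat ->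
      K * (if Nat.eqb j j0 then c0 else 0) - L j * Rabs (dl j) <= (2 * PI * Y j) * dl j).
  { intros j Hj. apply term_lower_bound; [apply log_width_nonneg | exact HK |].
    destruct (Hest j Hj) as [Hbounded Hlarge].
    destruct (classic (p j = (0, 0))) as [Hpz|Hpz].
    - assert (Hdl : dl j = pairing n mu (X j) - lam j) by (unfold dl; now rewrite Htp).
      destruct (classic (w j = (0, 0))) as [Hwz|Hwz].
      + right; right. destruct (Nat.eqb_spec j j0) as [->|]; [contradiction|].
        rewrite Hdl, Htw by auto. split; ring.
      + right; left. split; [now apply Hlarge|].
        pose proof (Hmu j Hj). destruct (Nat.eqb_spec j j0) as [->|]; [unfold c0|]; lra.
    - left. split; [now apply Hbounded|].
      destruct (Nat.eqb_spec j j0) as [->|]; [contradiction | reflexivity]. }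
  pose proof (sum_lower_bound d j0 K c0 L dl (fun j => 2 * PI * Y j) Hj0 Hterm) as Hsum.
  cbv beta in Hsum. rewrite Horth in Hsum. fold B in Hsum.
  assert (K * c0 = B + 1) by (unfold K; field; lra). lra.
Qed.

Lemma cl_rescale w x y q (rh : nat -> R) :
  cl w x -> (forall j, (j < d)%nat -> 0 <= rh j /\ y j = rscale (rh j) (w j)) ->
  CdD q -> (forall j, (j < d)%nat -> q j = rscale (rh j) (x j)) -> cl y q.
Proof.
  intros [_ Hx] Hy Hq Hqx. split; auto. intros eps He.
  destruct (finite_bound d rh) as [M [HM HMb]].
  destruct (Hx (eps / M)) as [s [[Y [HY ->]] Hs]]; [apply Rdiv_lt_0_compat; lra|].
  exists (actA d Y y). split; [exists Y; split; auto|].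
  intros j Hj. destruct (Hy j Hj) as [Hr Hyj]. specialize (HMb j Hj).
  rewrite Rabs_right in HMb by lra.
  rewrite Hqx, (actA_lt d Y y j), Hyj, rscale_rscale, (Rmult_comm (exp _) (rh j)),
    <- rscale_rscale, <- (actA_lt d Y w j) by auto.
  apply close_rscale with M; [lra | lra | now apply Hs].
Qed.

(* Two points p, t of cl(Aw) have a common point q = (a_j b_j w_j)_j in their
   orbit closures, where p_j = a_j w_j and t_j = b_j w_j. *)
Lemma cl_common_point w p t : CdD w -> cl w p -> cl w t ->
  exists q, cl p q /\ cl t q.
Proof.
  intros Hw Hp Ht.
  pose proof (cl_ray _ _ Hp) as Hrp. pose proof (cl_ray _ _ Ht) as Hrt.
  set (q := fun j => rscale (ray_coef (p j) (w j)) (t j)).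
  destruct (CdDelta_witness _ _ _ _ _ Hw) as [mu Hmu].
  destruct (zeros_tight w p mu Hmu Hp) as [HmuD Htp].
  destruct (zeros_tight w t mu Hmu Ht) as [_ Htt].
  assert (Hq : CdD q).
  { apply CdDelta_of_witness with mu.
    - intros j Hj. unfold q. destruct Ht as [[Ht0 _] _]. rewrite Ht0 by auto.
      unfold rscale; simpl; f_equal; ring.
    - split; auto. intros j Hj Hqj. apply rscale_eq0 in Hqj as [Hz|Hz]; [|now apply Htt].
      apply Htp; auto. destruct (Hrp j Hj) as [_ ->]. rewrite Hz.
      unfold rscale; simpl; f_equal; ring. }
  exists q. split.
  - apply cl_rescale with w t (fun j => ray_coef (p j) (w j)); auto.
  - apply cl_rescale with w p (fun j => ray_coef (t j) (w j)); auto.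
    intros j Hj. unfold q. destruct (Hrp j Hj) as [_ Hpj]. destruct (Hrt j Hj) as [_ Htj].
    set (a := ray_coef (p j) (w j)) in *. set (b := ray_coef (t j) (w j)) in *.
    rewrite Hpj, Htj, !rscale_rscale, (Rmult_comm a b). reflexivity.
Qed.

End OrbitClosures.

Theorem mainTheorem4 (n d : nat) (X : nat -> nat -> R) (lam : nat -> R)
    (gens : list (nat -> R))
    (hDelta : polytope_with_facets n d X lam)
    (hQspan : spans n gens)
    (hXQ : forall j, (j < d)%nat -> inQ n gens (X j)) :
  (forall z, CdDelta n d X lam z -> simN n d X lam gens z z) /\
  (forall z w, simN n d X lam gens z w -> simN n d X lam gens w z) /\
  (forall z w u, simN n d X lam gens z w -> simN n d X lam gens w u ->
                 simN n d X lam gens z u).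
Proof.
  split; [|split].
  -
    intros z Hz. do 2 (split; auto). exists z. split; [|now apply cl_self].
    exists (fun _ => 0), z. split; [apply in_N_0|]. split; [now apply cl_self|].
    now rewrite actT_0.
  - (* symmetry: if g.s is in cl(Aw) then s = g^-1.(g.s) *)
    intros z w [Hz [Hw [p [[Z [s [HZ [Hs ->]]]] Hp]]]]. do 2 (split; auto).
    exists s. split; auto.
    exists (fun j => - Z j), (actT d Z s). split; [now apply in_N_opp|].
    split; [exact Hp | now rewrite actT_inv].
  - (* transitivity through a common point q of cl(A(g.s)) and cl(At) *)
    intros z w u [Hz [Hw [p [[Z [s [HZ [Hs ->]]]] Hp]]]]
                 [_ [Hu [p' [[Z' [t [HZ' [Ht ->]]]] Hp']]]].
    destruct (cl_common_point _ _ _ _ _ _ _ Hw Hp Ht) as [q [Hqp Hqt]].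
    do 2 (split; auto). exists (actT d Z' q). split.
    + exists (fun j => Z' j + Z j), (actT d (fun j => - Z j) q).
      split; [now apply in_N_plus|]. split.
      * eapply cl_trans; [|exact Hs].
        pose proof (cl_actT _ _ _ _ (fun j => - Z j) _ _ Hqp) as H.
        now rewrite actT_inv in H.
      * rewrite actT_actT. f_equal. apply functional_extensionality; intros; ring.
    + eapply cl_trans; [|exact Hp']. now apply cl_actT.
Qed.
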